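(* Let $n,t,k$ be integers with $n\geq 2t\geq 4$ and $k\geq 2$. Then $A_k(n,0^t)\leq \beta_k(t)^n$, where $\beta_k(t)=k-(k-1)k^{-t-1}$.
   Context: Words are over $\Sigma_k=\{0,1,\ldots,k-1\}$, and $0^t$ is the word consisting of $t$ zeros. $A_k(m,v)$ denotes the number of words of length $m$ over $\Sigma_k$ that do not contain $v$ as a factor. *)

From mathcomp Require Import all_boot all_order all_algebra.
Set Implicit Arguments. Unset Strict Implicit. Unset Printing Implicit Defensive.
Import Order.TTheory GRing.Theory Num.Theory.

Definition has_factor (k : nat) (w v : seq 'I_k) : bool := infix v w.

(* The word 0^t over 'I_k (requires k >= 1 to have the letter 0;
   we index by k.+1 so that 0 exists). *)
Definition zeros (k t : nat) : seq 'I_k.+1 := nseq t ord0.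

Definition A (k m : nat) (v : seq 'I_k) : nat :=
  #|[set w : m.-tuple 'I_k | ~~ has_factor (val w) v]|.

Definition beta (k t : nat) : rat :=
  (k%:R - (k%:R - 1) / (k%:R ^+ t.+1))%R.

From mathcomp Require Import all_boot all_order all_algebra.
From mathcomp Require Import zify ring lra.
Import Order.TTheory GRing.Theory Num.Theory.

Set Implicit Arguments.
Unset Strict Implicit.
Unset Printing Implicit Defensive.

(* Let a_m count the words of length m avoiding the run c^t.  Splitting a word
   of length m+1 by its first letter gives a_{m+1} <= k a_m - (k-1) a_{m-t}
   for m >= t: prepending c to c^{t-1} x u (x <> c, u avoiding) creates the
   run.  Since a_m <= k^t a_{m-t}, this yields a_{m+1} <= beta a_m for m >= t.
   For the base case the same recurrence, with a_j = k^j for j < t, gives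
   a_{2t} <= k^{2t} - k^t - t(k-1)k^{t-1}, and Bernoulli's inequality for
   beta^{2t} = k^{2t} (1 - (k-1)/k^{t+2})^{2t} shows this is at most
   beta^{2t}. *)

Section TupleCounting.
Variable T : finType.
Implicit Types (P Q : pred (seq T)) (s : seq T).

Definition nwords m P : nat := \sum_(w : m.-tuple T) P w.

Lemma nwordsS m P : nwords m.+1 P = \sum_(x : T) nwords m (fun s => P (x :: s)).
Proof.
rewrite /nwords (reindex (fun p : T * m.-tuple T => [tuple of p.1 :: p.2])) /=.
  by rewrite -(pair_big xpredT xpredT (fun x (w : m.-tuple T) => (P (x :: w) : nat))).
exists (fun w : m.+1.-tuple T => (thead w, [tuple of behead w])).
  by case=> x w _ /=; rewrite theadE; congr pair; apply: val_inj.
by move=> w _; rewrite [in RHS](tuple_eta w); apply: val_inj.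
Qed.

Lemma le_nwords m P Q : subpred P Q -> nwords m P <= nwords m Q.
Proof. by move=> PQ; apply: leq_sum => w _; case: (boolP (P w)) => // /PQ ->. Qed.

Lemma nwords_size m P : (forall s, size s = m -> P s) -> nwords m P = #|T| ^ m.
Proof.
move=> Pm; rewrite /nwords (eq_bigr (fun _ => 1)) => [|w _].
  by rewrite sum1_card card_tuple.
by rewrite Pm ?size_tuple.
Qed.

Lemma nwordsID m P Q :
  nwords m (fun s => P s && Q s) + nwords m (fun s => P s && ~~ Q s) = nwords m P.
Proof.
by rewrite /nwords -big_split; apply: eq_bigr => w _; case: (P w); case: (Q w).
Qed.

Lemma nwordsC m P : nwords m P + nwords m (predC P) = #|T| ^ m.
Proof. by rewrite -(@nwords_size m predT) // -(nwordsID m predT P). Qed.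

Lemma nwords_cat s r P : nwords r (fun u => P (s ++ u)) <= nwords (size s + r) P.
Proof.
elim: s P => [|x s IHs] P //=.
by rewrite addSn nwordsS (bigD1 x) //=; apply: leq_trans (leq_addr _ _); apply: IHs.
Qed.

Lemma nwordsS_le m P :
  (forall x s, P (x :: s) -> P s) -> nwords m.+1 P <= #|T| * nwords m P.
Proof.
move=> Pbehead; rewrite nwordsS -sum_nat_const.
by apply: leq_sum => x _; apply: le_nwords => s; apply: Pbehead.
Qed.

End TupleCounting.

Section FactorAvoidance.
Variable k : nat.
Implicit Type v : seq 'I_k.

Lemma A_nwords m v : A m v = nwords m (fun s => ~~ infix v s).
Proof.
rewrite /A /nwords -sum1_card big_mkcond; apply: eq_bigr => w _.
by rewrite inE /has_factor; case: infix.
Qed.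

Lemma A_short m v : m < size v -> A m v = k ^ m.
Proof.
move=> mv; rewrite A_nwords nwords_size ?card_ord // => s sm.
by apply: contraTN mv => /size_infix; rewrite sm -leqNgt.
Qed.

Lemma A_size_lt v : A (size v) v < k ^ size v.
Proof.
rewrite A_nwords -[k in k ^ _]card_ord -(nwordsC _ (fun s => ~~ infix v s)).
rewrite -addn1 leq_add2l.
have := nwords_cat v 0 (predC (fun s => ~~ infix v s)); rewrite addn0; apply: leq_trans.
by rewrite nwords_size // => s /size0nil ->; rewrite /= negbK cats0 infix_refl.
Qed.

Lemma A_leS m v : A m.+1 v <= k * A m v.
Proof.
rewrite !A_nwords -[k in k * _]card_ord; apply: nwordsS_le => x s.
exact/contra/(infix_catl [:: x]).
Qed.

Lemma A_le_expn m j v : A (m + j) v <= k ^ j * A m v.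
Proof.
elim: j => [|j IHj]; first by rewrite addn0 mul1n.
by rewrite addnS expnS -mulnA; apply: leq_trans (A_leS _ _) _; rewrite leq_mul2l IHj orbT.
Qed.

End FactorAvoidance.

Lemma prefix_nseq_catN (T : eqType) (c x : T) n j u :
  x != c -> j < n -> ~~ prefix (nseq n c) (nseq j c ++ x :: u).
Proof.
move=> xc; elim: j n => [|j IHj] [|n] //=; first by rewrite eq_sym (negbTE xc).
by rewrite eqxx ltnS; apply: IHj.
Qed.

Lemma bernoulli_ineq (R : realDomainType) (y : R) n :
  (-1 <= y -> 1 + n%:R * y <= (1 + y) ^+ n)%R.
Proof.
move=> y_ge; elim: n => [|n IHn]; first by rewrite expr0 mul0r addr0.
have y1_ge0 : (0 <= 1 + y)%R by lra.
rewrite exprS; apply: le_trans (ler_wpM2l y1_ge0 IHn).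
by have := ler0n R n; rewrite -natr1; nra.
Qed.

Lemma beta_ge0 k t : 0 < k -> (0 <= beta k t)%R.
Proof.
move=> k_gt0; rewrite /beta subr_ge0.
have kt_ge1 : (1 <= k%:R ^+ t.+1 :> rat)%R by rewrite exprn_ege1 // ler1n.
rewrite ler_pdivrMr ?(lt_le_trans ltr01) //.
by apply: le_trans (ler_peMr (ler0n _ k) kt_ge1); rewrite lerBlDr lerDl.
Qed.

Section RunAvoidance.
Variables (k t : nat) (c : 'I_k).
Hypothesis t_gt0 : 0 < t.
Local Notation run := (nseq t c).
Local Notation a m := (A m run).

Definition run_free (s : seq 'I_k) := ~~ infix run s.

Lemma infix_run_cons x s : x != c -> infix run (x :: s) = infix run s.
Proof. by move=> xc; rewrite infix_consl (negbTE (prefix_nseq_catN s xc t_gt0)). Qed.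

Lemma run_free_cat j x u : j < t -> x != c -> run_free u -> run_free (nseq j c ++ x :: u).
Proof.
rewrite /run_free => jt xc; elim: j jt => [_|j IHj jt] free_u.
  by rewrite infix_run_cons.
rewrite [nseq j.+1 c]/= cat_cons infix_consl negb_or IHj ?(ltnW jt) // andbT.
exact: (prefix_nseq_catN (j := j.+1) u xc jt).
Qed.

Lemma A_run_free m : a m = nwords m run_free.
Proof. exact: A_nwords. Qed.

Lemma A_run_short j : j < t -> a j = k ^ j.
Proof. by move=> jt; rewrite A_short ?size_nseq. Qed.

Lemma A_run_full : a t < k ^ t.
Proof. by have := A_size_lt run; rewrite size_nseq. Qed.

Lemma A_run_first_letter m :
  a m.+1 = nwords m (fun s => run_free (c :: s)) + k.-1 * a m.
Proof.
rewrite !A_run_free nwordsS (bigD1 c) //; congr (_ + _).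
rewrite -[k in k.-1]card_ord -(cardC1 c) -sum_nat_const.
by apply: eq_bigr => x xc; apply: eq_bigr => w _; rewrite /run_free infix_run_cons.
Qed.

(* Injects the words c^{t-1} x u, with x <> c and u run-free of length m - t. *)
Lemma nwords_run_blocked m : t <= m ->
  k.-1 * a (m - t) <= nwords m (fun s => run_free s && ~~ run_free (c :: s)).
Proof.
move=> tm; set r := m - t.
have -> : m = size (nseq t.-1 c) + r.+1 by rewrite size_nseq /r; lia.
apply: leq_trans (nwords_cat _ _ _); rewrite nwordsS (bigD1 c) //.
apply: leq_trans (leq_addl _ _).
rewrite A_run_free -[k in k.-1]card_ord -(cardC1 c) -sum_nat_const.
apply: leq_sum => x xc; apply: le_nwords => u free_u; apply/andP; split.
  by apply: run_free_cat; rewrite ?prednK.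
by rewrite /run_free negbK -cat_cons -[c :: _]/(nseq t.-1.+1 c) prednK // prefix_infix.
Qed.

Lemma A_run_rec m : t <= m -> a m.+1 + k.-1 * a (m - t) <= k * a m.
Proof.
move=> tm; have k_gt0 : 0 < k by case: k c => [[]|].
have := nwordsID m run_free (fun s => run_free (c :: s)).
have -> : nwords m (fun s => run_free s && run_free (c :: s))
          = nwords m (fun s => run_free (c :: s)).
  apply: eq_bigr => w _; case: (boolP (run_free w)) => //= /negPn run_w.
  by rewrite /run_free (infix_catl [:: c] run_w : infix run (c :: w)).
rewrite -A_run_free A_run_first_letter; have := nwords_run_blocked tm; nia.
Qed.

(* Scaled by k to avoid the exponent j - 1 in
   a_{t+j} <= k^{t+j} - k^j - j (k-1) k^{j-1}. *)
Lemma A_run_add_le j :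
  j <= t -> k * a (t + j) + k ^ j.+1 + j * k.-1 * k ^ j <= k ^ (t + j).+1.
Proof.
elim: j => [|j IHj] jt.
  by rewrite addn0 mul0n addn0 expn1 expnS -mulnSr leq_mul2l A_run_full orbT.
have rec := A_run_rec (leq_addr j t); rewrite addKn (A_run_short jt) in rec.
have := IHj (ltnW jt); rewrite addnS !expnS in rec *.
set X := k ^ (t + j); set P := k ^ j; nia.
Qed.

Local Open Scope ring_scope.

Lemma A_run_step m : (t <= m)%N -> (a m.+1)%:R <= beta k t * (a m)%:R.
Proof.
move=> tm; have k_gt0 : (0 < k)%N by case: k c => [[]|].
have rec := A_run_rec tm; rewrite -(ler_nat rat) natrD !natrM -subn1 natrB // in rec.
set K : rat := k%:R in rec *; set X := K ^+ t.+1.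
have X_gt0 : 0 < X by rewrite exprn_gt0 // ltr0n.
(* beta only uses the weaker growth factor k^(t+1) instead of k^t. *)
have growth : (a m)%:R <= X * (a (m - t))%:R.
  rewrite /X /K -natrX -natrM ler_nat; have := A_le_expn (m - t) t (nseq t c).
  by rewrite subnK // => /leq_trans; apply; rewrite leq_mul2r expnS leq_pmull ?orbT.
have : (K - 1) / X * (a m)%:R <= (K - 1) * (a (m - t))%:R.
  by rewrite mulrAC ler_pdivrMr // -mulrA ler_wpM2l ?subr_ge0 ?ler1n // mulrC.
rewrite /beta -/K -/X; lra.
Qed.

Lemma A_run_double : (1 < k)%N -> (a (2 * t))%:R <= beta k t ^+ (2 * t).
Proof.
move=> k_gt1; rewrite mul2n -addnn; set K : rat := k%:R; set P := K ^+ t.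
have base : K * (a (t + t))%:R + K * P + t%:R * (K - 1) * P <= K * (P * P).
  have := A_run_add_le (leqnn t).
  rewrite !expnS expnD -(ler_nat rat) !natrD !natrM !natrX.
  by rewrite -subn1 natrB // ltnW.
have K_ge2 : 2 <= K by rewrite ler_nat.
have K_gt0 : 0 < K by lra.
have P_ge1 : 1 <= P by rewrite exprn_ege1 // (le_trans _ K_ge2).
have K_neq0 : K != 0 by rewrite gt_eqF.
have P_neq0 : P != 0 by rewrite gt_eqF //; lra.
have KK_gt0 : 0 < K * K by rewrite mulr_gt0.
set y := - ((K - 1) / (K * K * P)).
have y_ge : -1 <= y.
  rewrite lerN2 ler_pdivrMr ?mul1r; last by rewrite !mulr_gt0 //; lra.
  by nra.
have -> : beta k t = K * (1 + y).
  by rewrite /beta exprS -/K -/P /y; field; apply/andP.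
rewrite exprMn exprD -/P.
apply: le_trans (ler_wpM2l _ (bernoulli_ineq (t + t) y_ge)); last by nra.
rewrite -(ler_pM2l KK_gt0).
have -> : K * K * (P * P * (1 + (t + t)%:R * y))
          = K * K * (P * P) - (t + t)%:R * (K - 1) * P.
  by rewrite /y; field; apply/andP.
have := ler_wpM2l (ltW K_gt0) base.
have : 0 <= t%:R * (K - 1) * P * (K - 2) by rewrite !mulr_ge0 ?ler0n //; lra.
have : 0 <= K * K * P by rewrite mulr_ge0 ?(ltW KK_gt0) //; lra.
rewrite natrD; lra.
Qed.

Lemma A_run_le_beta n : (1 < k)%N -> (2 * t <= n)%N -> (a n)%:R <= beta k t ^+ n.
Proof.
move=> k_gt1 /subnK <-; elim: (n - 2 * t)%N => [|d IHd]; first exact: A_run_double.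
rewrite addSn exprS; apply: le_trans (A_run_step _) _.
  by rewrite (leq_trans _ (leq_addl d _)) // mul2n -addnn leq_addr.
by rewrite ler_wpM2l // beta_ge0 // ltnW.
Qed.

End RunAvoidance.

Theorem lemma14 (n t k : nat) (ht : 2 <= t) (hn : 2 * t <= n) (hk : 2 <= k) :
  ((A n (zeros k.-1 t))%:R <= beta k t ^+ n :> rat)%R.
Proof.
case: k hk => [//|k] hk.
by apply: A_run_le_beta => //; apply: ltnW.
Qed.
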